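(* If $G$ is a $\chi_\rho$-critical graph, then $G$ is connected.
   Context: Graphs are finite and simple. A $k$-packing coloring of $G$ is a map $c:V(G)\to\{1,\ldots,k\}$ such that two distinct vertices $u,v$ with $c(u)=c(v)=i$ satisfy $d_G(u,v)>i$ (distance between vertices in different components is infinite); $\chi_\rho(G)$ is the smallest $k$ for which such a coloring exists. $G$ is $\chi_\rho$-critical if $\chi_\rho(H)<\chi_\rho(G)$ for every proper subgraph $H$ of $G$. *)

From mathcomp Require Import all_boot.
From mathcomp Require Import boolp.

Set Implicit Arguments.
Unset Strict Implicit.
Unset Printing Implicit Defensive.

Definition is_graph (T : finType) (V : {set T}) (E : rel T) : Prop :=
  [/\ symmetric E, irreflexive E & forall u v, E u v -> (u \in V) && (v \in V)].

Definition is_subgraph (T : finType) (W : {set T}) (F : rel T)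
    (V : {set T}) (E : rel T) : Prop :=
  is_graph W F /\ W \subset V /\ (forall u v, F u v -> E u v).

Definition is_proper_subgraph (T : finType) (W : {set T}) (F : rel T)
    (V : {set T}) (E : rel T) : Prop :=
  is_subgraph W F V E /\ (W != V \/ exists u v, E u v && ~~ F u v).

(* there is a walk of length at most n from u to v using edges of E,
   i.e. d(u,v) <= n (infinite if no walk exists at all). *)
Definition walk_le (T : finType) (E : rel T) (n : nat) (u v : T) : Prop :=
  exists p : seq T, [/\ size p <= n, path E u p & last u p = v].

Definition packing_coloring (T : finType) (V : {set T}) (E : rel T)
    (k : nat) (c : T -> nat) : Prop :=
  (forall v, v \in V -> 1 <= c v <= k) /\
  (forall u v, u \in V -> v \in V -> u != v -> c u = c v -> ~ walk_le E (c u) u v).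

Definition packing_colorable (T : finType) (V : {set T}) (E : rel T) (k : nat) :=
  exists c : T -> nat, packing_coloring V E k c.

Lemma packing_colorable_ex (T : finType) (V : {set T}) (E : rel T) :
  exists k, `[< packing_colorable V E k >].
Proof.
exists #|T|; apply/asboolP.
exists (fun v => (enum_rank v).+1); split.
  by move=> v _; rewrite /= ltn_ord.
by move=> u v _ _ /eqP uv [] /val_inj /enum_rank_inj.
Qed.

Definition chi_rho (T : finType) (V : {set T}) (E : rel T) : nat :=
  ex_minn (packing_colorable_ex V E).

Definition chi_rho_critical (T : finType) (V : {set T}) (E : rel T) : Prop :=
  forall (W : {set T}) (F : rel T),
    is_proper_subgraph W F V E -> chi_rho W F < chi_rho V E.

Definition connected_graph (T : finType) (V : {set T}) (E : rel T) : Prop :=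
  forall u v, u \in V -> v \in V -> exists p : seq T, path E u p /\ last u p = v.

(** A disconnected graph is the union of two nonempty vertex sets that no
    edge joins, for instance a component and its complement.  Two vertices
    lying on different sides are at infinite distance, so packing colorings
    of the two induced subgraphs glue to a packing coloring of the whole
    graph; hence chi_rho(G) is at most the maximum of the two packing
    chromatic numbers.  Both induced subgraphs are proper, so criticality
    makes each of them strictly smaller than chi_rho(G), a contradiction. *)
From mathcomp Require Import all_boot.
From mathcomp Require Import boolp.

Set Implicit Arguments.
Unset Strict Implicit.
Unset Printing Implicit Defensive.

Lemma chi_rho_colorable (T : finType) (V : {set T}) (E : rel T) :
  packing_colorable V E (chi_rho V E).
Proof. by rewrite /chi_rho; case: ex_minnP => k /asboolP. Qed.

Lemma chi_rho_min (T : finType) (V : {set T}) (E : rel T) (k : nat) :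
  packing_colorable V E k -> chi_rho V E <= k.
Proof. by rewrite /chi_rho; case: ex_minnP => m _ min_m /asboolP/min_m. Qed.

Section InducedSubgraph.

Variables (T : finType) (E : rel T).

Definition induced (S : {set T}) : rel T :=
  [rel x y | [&& E x y, x \in S & y \in S]].

Lemma induced_proper_subgraph (V S : {set T}) :
  is_graph V E -> S \subset V -> S != V -> is_proper_subgraph S (induced S) V E.
Proof.
move=> [symE irrE _] sSV neSV; split; last by left.
split; last by split=> // u v /and3P [].
split=> [x y | x | u v /and3P [_ -> ->] //]; last by rewrite /induced /= irrE.
by rewrite /induced /= symE [(x \in S) && _]andbC.
Qed.

Lemma graph_closed (V : {set T}) : is_graph V E -> closed E V.
Proof. by move=> [_ _ inV] x y /inV /andP [-> ->]. Qed.

Lemma closed_setI (A B : {set T}) :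
  closed E A -> closed E B -> closed E (A :&: B).
Proof. by move=> clA clB x y exy; rewrite !inE (clA _ _ exy) (clB _ _ exy). Qed.

Lemma closed_setD (A B : {set T}) :
  closed E A -> closed E B -> closed E (A :\: B).
Proof. by move=> clA clB x y exy; rewrite !inE (clA _ _ exy) (clB _ _ exy). Qed.

Lemma walk_le_connect n x y : walk_le E n x y -> connect E x y.
Proof. by case=> p [_ Ep <-]; apply/connectP; exists p. Qed.

Lemma closed_path_all (S : {set T}) x p :
  closed E S -> x \in S -> path E x p -> all [in S] (x :: p).
Proof.
move=> clS; elim: p x => [|y p IHp] x Sx /=; first by rewrite Sx.
by case/andP=> exy Ep; rewrite /= Sx; apply: IHp; rewrite // -(clS _ _ exy).
Qed.

Lemma walk_le_induced (S : {set T}) n x y :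
  closed E S -> x \in S -> walk_le E n x y -> walk_le (induced S) n x y.
Proof.
move=> clS Sx [p [size_p Ep <-]]; exists p; split=> //.
by apply: sub_in_path (closed_path_all clS Sx Ep) Ep => u v Su Sv Euv; apply/and3P.
Qed.

Lemma packing_coloring_closed (S : {set T}) k c x y :
  closed E S -> packing_coloring S (induced S) k c ->
  x \in S -> y \in S -> x != y -> c x = c y -> ~ walk_le E (c x) x y.
Proof.
by move=> clS [_ far_c] Sx Sy nxy cxy /(walk_le_induced clS Sx); apply: far_c.
Qed.

Lemma packing_coloring_union (A B : {set T}) k1 k2 c1 c2 :
  closed E A -> closed E B ->
  packing_coloring A (induced A) k1 c1 -> packing_coloring B (induced B) k2 c2 ->
  packing_coloring (A :|: B) E (maxn k1 k2)
    (fun x => if x \in A then c1 x else c2 x).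
Proof.
move=> clA clB col1 col2; split=> [x | x y ABx ABy nxy cxy W].
  case: ifP => [Ax _ | nAx].
    by case/andP: (col1.1 x Ax) => -> /leq_trans->; rewrite ?leq_maxl.
  by rewrite inE nAx => /col2.1 /andP [-> /leq_trans->]; rewrite ?leq_maxr.
have sideA := closed_connect clA (walk_le_connect W).
have sideB := closed_connect clB (walk_le_connect W).
move: cxy W; case: ifP => [Ax | nAx]; rewrite -sideA ?Ax ?nAx => cxy.
  by apply: (packing_coloring_closed clA col1 Ax _ nxy cxy); rewrite -sideA.
have Bx : x \in B by move: ABx; rewrite inE nAx.
by apply: (packing_coloring_closed clB col2 Bx _ nxy cxy); rewrite -sideB.
Qed.

Lemma chi_rho_union (A B : {set T}) :
  closed E A -> closed E B ->
  chi_rho (A :|: B) E <= maxn (chi_rho A (induced A)) (chi_rho B (induced B)).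
Proof.
move=> clA clB; have [c1 col1] := chi_rho_colorable A (induced A).
have [c2 col2] := chi_rho_colorable B (induced B).
by apply: chi_rho_min; eexists; apply: packing_coloring_union col1 col2.
Qed.

End InducedSubgraph.

Theorem lemma2p4 (T : finType) (V : {set T}) (E : rel T) :
  is_graph V E -> chi_rho_critical V E -> connected_graph V E.
Proof.
move=> G crit u v Vu Vv; have [symE _ _] := G.
have [/connectP [p Ep ->] | not_uv] := boolP (connect E u v); first by exists p.
set C := [set w | connect E u w].
have clC : closed E C.
  by move=> x y exy; rewrite !inE; apply: connect_closed (sym_connect_sym symE) u _ _ exy.
have clV := graph_closed G.
have proper_C : V :&: C != V.
  by apply/eqP=> VC; move: Vv; rewrite -VC !inE (negPf not_uv) andbF.
have proper_VC : V :\: C != V.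
  by apply/eqP=> VC; move: Vu; rewrite -VC !inE connect0.
have ltC := crit _ _ (induced_proper_subgraph G (subsetIl V C) proper_C).
have ltVC := crit _ _ (induced_proper_subgraph G (subsetDl V C) proper_VC).
have := chi_rho_union (closed_setI clV clC) (closed_setD clV clC).
by rewrite setID leqNgt gtn_max ltC ltVC.
Qed.
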